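(* Let $m,n,p\in\mathbb N^+$, let $G=(V,E)$ be a graph, and let $A,B\subseteq V$ be disjoint such that $|N(u)\cap B|\ge p$ for every $u\in A$. If $|A|>(m-1)(n-1)^p$, then (i) there are $m$ vertices $u_1,\ldots,u_m\in A$ and $p$ vertices $v_1,\ldots,v_p\in B$ with $\{u_i,v_j\}\in E$ for all $i\in[m]$, $j\in[p]$, or (ii) there are $n$ vertices $u_1,\ldots,u_n\in A$ and $n$ vertices $v_1,\ldots,v_n\in B$ such that for all $i,j\in[n]$, $\{u_i,v_j\}\in E$ if and only if $i=j$.
   Context: All graphs are simple. $N(u)$ denotes the set of neighbors of $u$ in $G$. $[n]=\{1,\dots,n\}$. *)

(* A simple graph on a finite vertex type T is a symmetric,
   irreflexive boolean relation e : rel T. *)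
From mathcomp Require Import all_boot.
Set Implicit Arguments. Unset Strict Implicit. Unset Printing Implicit Defensive.

Definition nbhd (T : finType) (e : rel T) (u : T) : {set T} := [set v | e u v].

(* The proof is
   by induction on p; in the step from p to p+1 put D = (m-1)(n-1)^p.
   - If some w in B has more than D neighbours in A, restrict A to those
     neighbours and B to B \ {w}: every remaining u keeps >= p neighbours, so by
     induction we get a K_{m,p}, which w extends to a K_{m,p+1}, or an induced
     matching of size n.
   - Otherwise every w in B has at most D neighbours in A while |A| > (n-1)D.
     A greedy procedure then builds an induced matching of size n: take u0 of
     minimum degree into B and a neighbour w0 of u0, then discard the
     neighbours of w0 from A and those of u0 from B.  Minimality of u0 ensures
     that every remaining vertex of A still has a neighbour in the remaining B,
     and only D vertices of A are lost per round. *)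

From mathcomp Require Import all_boot zify.
Set Implicit Arguments. Unset Strict Implicit. Unset Printing Implicit Defensive.

Section BicliqueOrInducedMatching.

Variables (T : finType) (e : rel T).

Definition biclique (m p : nat) (A B : {set T}) :=
  exists U W : {set T}, [/\ U \subset A, W \subset B, m <= #|U|, p <= #|W| &
    {in U & W, forall u w, e u w}].

Definition induced_matching (n : nat) (A B : {set T}) :=
  exists u v : 'I_n -> T, [/\ forall i, u i \in A, forall j, v j \in B &
    forall i j, e (u i) (v j) = (i == j)].

Definition dominated (A B : {set T}) :=
  forall u, u \in A -> exists2 w, w \in B & e u w.

Definition codegree_le (D : nat) (A B : {set T}) :=
  forall w, w \in B -> #|A :&: [set u | e u w]| <= D.

Lemma induced_matching_inj (I : eqType) (u v : I -> T) :
  (forall i j, e (u i) (v j) = (i == j)) -> injective u /\ injective v.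
Proof.
move=> huv; split=> i j eq_ij; apply/eqP.
  by rewrite eq_sym -huv -eq_ij huv.
by rewrite -huv -eq_ij huv.
Qed.

Lemma induced_matching_subset n (A A' B B' : {set T}) :
  A' \subset A -> B' \subset B ->
  induced_matching n A' B' -> induced_matching n A B.
Proof.
move=> sA sB [u [v [uA vB huv]]].
by exists u, v; split=> [i|j|//]; [apply: (subsetP sA) | apply: (subsetP sB)].
Qed.

Lemma induced_matching0 (A B : {set T}) : induced_matching 0 A B.
Proof. have f : 'I_0 -> T by case. by exists f, f; split; case. Qed.

Lemma induced_matching_cons n (A B : {set T}) u0 w0 :
  u0 \in A -> w0 \in B -> e u0 w0 ->
  induced_matching n (A :\: [set u | e u w0]) (B :\: nbhd e u0) ->
  induced_matching n.+1 A B.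
Proof.
move=> u0A w0B e0 [u [v [uA vB huv]]].
pose u' (i : 'I_n.+1) := if unlift ord0 i is Some k then u k else u0.
pose v' (j : 'I_n.+1) := if unlift ord0 j is Some k then v k else w0.
exists u', v'; split.
- move=> i; rewrite /u'; case: unliftP => [k|] _ //.
  by have := uA k; rewrite inE => /andP [].
- move=> j; rewrite /v'; case: unliftP => [k|] _ //.
  by have := vB k; rewrite inE => /andP [].
move=> i j; rewrite /u' /v'.
case: (unliftP ord0 i) => [i'|] ->; case: (unliftP ord0 j) => [j'|] ->.
- by rewrite huv (inj_eq lift_inj).
- have := uA i'; rewrite !inE => /andP [/negbTE -> _].
  by rewrite eq_sym (negbTE (neq_lift _ _)).
- have := vB j'; rewrite !inE => /andP [/negbTE -> _].
  by rewrite (negbTE (neq_lift _ _)).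
by rewrite eqxx.
Qed.

Lemma private_neighbour (B : {set T}) u0 w0 u :
  #|nbhd e u0 :&: B| <= #|nbhd e u :&: B| ->
  w0 \in B -> e u0 w0 -> ~~ e u w0 ->
  exists2 w, w \in B :\: nbhd e u0 & e u w.
Proof.
move=> min_u0 w0B e0 ne.
have [w /andP [wB' euw] | no_w] :=
  pickP [pred w | (w \in B :\: nbhd e u0) && e u w].
  by exists w.
have sub : nbhd e u :&: B \subset nbhd e u0 :&: B.
  apply/subsetP => w; rewrite !inE => /andP [euw wB]; rewrite wB andbT.
  by apply: contraFT (no_w w) => nw; rewrite /= !inE nw wB euw.
have /eqP/setP/(_ w0) : nbhd e u :&: B == nbhd e u0 :&: B.
  by rewrite eqEcard sub min_u0.
by rewrite !inE e0 w0B (negbTE ne).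
Qed.

(* One round of the greedy construction: it removes at most D vertices of A
   and preserves the hypotheses needed for the next round. *)
Lemma greedy_step D k (A B : {set T}) :
  dominated A B -> codegree_le D A B -> 0 < #|A| ->
  (forall A' B', dominated A' B' -> codegree_le D A' B' ->
     #|A| <= #|A'| + D -> induced_matching k A' B') ->
  induced_matching k.+1 A B.
Proof.
move=> domAB degAB /card_gt0P [x0 x0A] next.
case: (arg_minnP (fun u => #|nbhd e u :&: B|) x0A) => u0 u0A min_u0.
have [w0 w0B e0] := domAB u0 u0A.
apply: (induced_matching_cons u0A w0B e0); apply: next.
- move=> u; rewrite !inE => /andP [ne uA].
  exact: private_neighbour (min_u0 u uA) w0B e0 ne.
- move=> w /setDP [wB _]; apply: leq_trans (degAB w wB).
  by apply/subset_leq_card/setSI/subsetDl.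
- by rewrite -(cardsID [set u | e u w0] A) addnC leq_add2l degAB.
Qed.

Lemma greedy_induced_matching D k (A B : {set T}) :
  dominated A B -> codegree_le D A B -> k * D < #|A| ->
  induced_matching k.+1 A B.
Proof.
elim: k A B => [|k IH] A B domAB degAB hA;
  apply: (greedy_step domAB degAB) => [|A' B' domA' degA' lost]; try lia.
  exact: induced_matching0.
by apply: IH domA' degA' _; lia.
Qed.

Lemma card_nbhd_setD1 u (B : {set T}) w :
  #|nbhd e u :&: B| <= #|nbhd e u :&: (B :\ w)|.+1.
Proof.
by rewrite setIDA (cardsD1 w (nbhd e u :&: B)) addnC -addn1 leq_add2l leq_b1.
Qed.

Lemma biclique_add_vertex m p (A B : {set T}) w :
  w \in B -> biclique m p (A :&: [set u | e u w]) (B :\ w) ->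
  biclique m p.+1 A B.
Proof.
move=> wB [U [W [sUA sWB hU hW hUW]]].
have wW : w \notin W by apply/negP => /(subsetP sWB); rewrite !inE eqxx.
have adj_w : {in U, forall u, e u w}.
  by move=> u /(subsetP sUA); rewrite !inE => /andP [].
exists U, (w |: W); split.
- exact: subset_trans sUA (subsetIl _ _).
- by rewrite subUset sub1set wB (subset_trans sWB) ?subsetDl.
- exact: hU.
- by rewrite cardsU1 wW.
by move=> u x uU; rewrite in_setU1 => /predU1P [->|]; [apply: adj_w | apply: hUW].
Qed.

Lemma biclique_or_induced_matching m n p (A B : {set T}) : 0 < n ->
  (forall u, u \in A -> p <= #|nbhd e u :&: B|) ->
  (m - 1) * (n - 1) ^ p < #|A| -> biclique m p A B \/ induced_matching n A B.
Proof.
move=> n_pos; elim: p A B => [|p IH] A B degA hA.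
  left; exists A, set0; split; rewrite ?sub0set ?cards0 //; first lia.
  by move=> u w _; rewrite inE.
set D := (m - 1) * (n - 1) ^ p.
have [w /andP [wB heavy] | light] :=
  pickP [pred w | (w \in B) && (D < #|A :&: [set u | e u w]|)].
  have degA' u : u \in A :&: [set u | e u w] -> p <= #|nbhd e u :&: (B :\ w)|.
    by move=> /setIP [uA _]; have := card_nbhd_setD1 u B w; have := degA u uA; lia.
  have [bic | mat] := IH _ (B :\ w) degA' heavy.
    by left; apply: biclique_add_vertex bic.
  by right; apply: induced_matching_subset mat; rewrite ?subsetIl ?subsetDl.
right; rewrite -(subnK n_pos) addn1.
apply: (@greedy_induced_matching D).
- move=> u uA; have /card_gt0P [w] : 0 < #|nbhd e u :&: B| by have := degA u uA; lia.
  by rewrite !inE => /andP [euw wB]; exists w.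
- by move=> w wB; have := light w; rewrite /= wB leqNgt => /negbFE.
by rewrite mulnC -mulnA -expnSr; lia.
Qed.

Lemma biclique_families m p (A B : {set T}) : biclique m p A B ->
  exists (u : 'I_m -> T) (v : 'I_p -> T),
    [/\ injective u, injective v, (forall i, u i \in A),
        (forall j, v j \in B) & (forall i j, e (u i) (v j))].
Proof.
move=> [U [W [sUA sWB hU hW hUW]]].
exists (fun i => enum_val (widen_ord hU i)), (fun j => enum_val (widen_ord hW j)).
split.
- by move=> i j /enum_val_inj/(congr1 val) /= /val_inj.
- by move=> i j /enum_val_inj/(congr1 val) /= /val_inj.
- by move=> i; apply: (subsetP sUA); apply: enum_valP.
- by move=> j; apply: (subsetP sWB); apply: enum_valP.
by move=> i j; apply: hUW; apply: enum_valP.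
Qed.

End BicliqueOrInducedMatching.

Theorem lemma3p14 (T : finType) (e : rel T)
    (e_sym : symmetric e) (e_irr : irreflexive e)
    (m n p : nat) (m_pos : 0 < m) (n_pos : 0 < n) (p_pos : 0 < p)
    (A B : {set T}) (AB_disj : [disjoint A & B])
    (degA : forall u, u \in A -> p <= #|nbhd e u :&: B|)
    (hA : (m - 1) * (n - 1) ^ p < #|A|) :
  (exists (u : 'I_m -> T) (v : 'I_p -> T),
      [/\ injective u, injective v,
          (forall i, u i \in A), (forall j, v j \in B) &
          (forall i j, e (u i) (v j))])
  \/
  (exists (u : 'I_n -> T) (v : 'I_n -> T),
      [/\ injective u, injective v,
          (forall i, u i \in A), (forall j, v j \in B) &
          (forall i j, e (u i) (v j) = (i == j))]).
Proof.
have [bic | [u [v [uA vB huv]]]] := biclique_or_induced_matching n_pos degA hA.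
  by left; apply: biclique_families bic.
have [inj_u inj_v] := induced_matching_inj huv.
by right; exists u, v.
Qed.
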